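(* Let $2\le d_1\le d_2\le d_3\le d_4$, let $2\le s\le d_1$, and let $|\varphi\rangle=\sum_{i,j,k,r}a_{ijkr}|ijkr\rangle$ be a normalized pure state in $H_1\otimes H_2\otimes H_3\otimes H_4$ with $\dim H_i=d_i$. Then $$C^2(|\varphi\rangle)\ \ge\ \frac{1}{\binom{d_1-2}{s-2}\binom{d_2-2}{s-2}\binom{d_3-1}{s-1}\binom{d_4-1}{s-1}}\sum C^2(|\varphi\rangle_{s\otimes s\otimes s\otimes s}),$$ where the sum runs over all pure substates $|\varphi\rangle_{s\otimes s\otimes s\otimes s}=(G_1\otimes G_2\otimes G_3\otimes G_4)|\varphi\rangle$, $G_i=\sum_{x\in S_i}|x\rangle\langle x|$, over all choices of subsets $S_i\subseteq\{1,\dots,d_i\}$ with $|S_i|=s$.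
   Context: $C$ denotes the four-partite concurrence of a (not necessarily normalized) vector $|\psi\rangle$ with $\sigma=|\psi\rangle\langle\psi|$: $C(|\psi\rangle)=2^{-1}\sqrt{14(\mathrm{tr}\,\sigma)^2-\sum_\alpha\mathrm{tr}(\sigma_\alpha^2)}$, $\alpha$ running over the 14 nonempty proper subsets of $\{1,2,3,4\}$ and $\sigma_\alpha=\mathrm{tr}_{\bar\alpha}\sigma$. The computational bases of $H_i\cong\mathbb{C}^{d_i}$ are fixed. *)

From HB Require Import structures.
From mathcomp Require Import all_boot all_order all_algebra.
Set Implicit Arguments. Unset Strict Implicit. Unset Printing Implicit Defensive.
Import Order.TTheory GRing.Theory Num.Theory.
Local Open Scope ring_scope.

(* Multi-index of H1 (x) H2 (x) H3 (x) H4, computational basis, 0-based. *)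
Definition idx4 (d1 d2 d3 d4 : nat) : finType :=
  ('I_d1 * 'I_d2 * 'I_d3 * 'I_d4)%type.

Section Conc.
Variables (C : numClosedFieldType) (d1 d2 d3 d4 : nat).
Local Notation I := (idx4 d1 d2 d3 d4).

(* Party numbering: 0,1,2,3 correspond to H1,H2,H3,H4. *)
Definition p1 (p : I) : 'I_d1 := p.1.1.1.
Definition p2 (p : I) : 'I_d2 := p.1.1.2.
Definition p3 (p : I) : 'I_d3 := p.1.2.
Definition p4 (p : I) : 'I_d4 := p.2.

Definition mix (al : {set 'I_4}) (p q : I) : I :=
  (if (0 : 'I_4) \in al then p1 p else p1 q,
   if (1 : 'I_4) \in al then p2 p else p2 q,
   if (2 : 'I_4) \in al then p3 p else p3 q,
   if (3 : 'I_4) \in al then p4 p else p4 q).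

(* tr(sigma) for sigma = |psi><psi|, psi = sum_p a p |p> *)
Definition tr_sigma (a : I -> C) : C := \sum_(p : I) a p * (a p)^*.

(* tr(sigma_al^2), sigma_al = tr_{complement of al} sigma.  Writing p = (u,w),
   q = (v,w') with u,v the al-components and w,w' the others:
   (sigma_al)_{u v} = sum_w a(u,w) conj a(v,w), hence
   tr(sigma_al^2) = sum_{u,v,w,w'} a(u,w) conj a(v,w) a(v,w') conj a(u,w')
                  = sum_{p,q} a p * conj a (mix q p) * a q * conj a (mix p q). *)
Definition tr_red_sq (al : {set 'I_4}) (a : I -> C) : C :=
  \sum_(p : I) \sum_(q : I)
     a p * (a (mix al q p))^* * a q * (a (mix al p q))^*.

Definition conc4 (a : I -> C) : C :=
  2^-1 * sqrtC (14%:R * tr_sigma a ^+ 2 -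
    \sum_(al : {set 'I_4} | (al != set0) && (al != setT)) tr_red_sq al a).

Definition substate (S1 : {set 'I_d1}) (S2 : {set 'I_d2})
  (S3 : {set 'I_d3}) (S4 : {set 'I_d4}) (a : I -> C) : I -> C :=
  fun p => if [&& p1 p \in S1, p2 p \in S2, p3 p \in S3 & p4 p \in S4]
           then a p else 0.
End Conc.

From mathcomp Require Import all_boot all_order all_algebra.
From mathcomp Require Import ring zify.
Set Implicit Arguments. Unset Strict Implicit. Unset Printing Implicit Defensive.
Import Order.TTheory GRing.Theory Num.Theory.

(* Write a p for the amplitudes of the state, al for a nonempty
   proper set of parties, and mix al q p for the index taking its
   al-components from q and the others from p.  Expanding |.|^2 gives the
   Lagrange-type identity
     C^2 = 1/8 sum_al sum_(p,q) |a p a q - a (mix al q p) a (mix al p q)|^2,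
   a sum of nonnegative "swap defects".  Projecting onto a box
   S1 x S2 x S3 x S4 keeps exactly the defects with both p and q in the box
   (boxes are closed under mixing), so summing over all boxes with s-element
   sides weighs each defect by the number of boxes containing p and q, a
   product of binomials 'C(d_i - 1, s - 1) or 'C(d_i - 2, s - 2) according to
   whether p and q agree in party i.  A nonzero defect needs p and q to differ
   in at least two parties, and then this weight is at most
   'C(d1-2,s-2) 'C(d2-2,s-2) 'C(d3-1,s-1) 'C(d4-1,s-1) because
   'C(d-2,s-2) / 'C(d-1,s-1) = (s-1)/(d-1) decreases with d. *)

(* The k-subsets of a finite type T containing a fixed D are the unions of D
   with the (k - #|D|)-subsets of its complement. *)
Lemma card_supersets (T : finType) (D : {set T}) (k : nat) : #|D| <= k ->
  #|[set A : {set T} | D \subset A & #|A| == k]| = 'C(#|T| - #|D|, k - #|D|).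
Proof.
move=> leDk; rewrite -{1}(cardsC D) addKn -cards_draws.
have unionDK (B : {set T}) : B \subset ~: D -> (B :|: D) :\: D = B.
  by move=> sBD; rewrite setDUl setDv setU0; apply/setDidPl; rewrite disjoints_subset.
have inj_union : {in [set B : {set T} | B \subset ~: D & #|B| == (k - #|D|)] &,
                   injective (fun B => B :|: D)}.
  by move=> B1 B2; rewrite !inE => /andP[sB1 _] /andP[sB2 _] eqB; rewrite -(unionDK _ sB1) eqB unionDK.
rewrite -(card_in_imset inj_union); apply: eq_card => A; apply/idP/idP.
- rewrite inE => /andP[sDA /eqP cardA]; apply/imsetP; exists (A :\: D).
    by rewrite inE subsetDr /= cardsD (setIidPr sDA) cardA.
  by rewrite -{1}(setID A D) (setIidPr sDA) setUC.
- case/imsetP => B; rewrite inE => /andP[sBD /eqP cardB] ->.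
  have /eqP disjBD : B :&: D == set0 by rewrite setI_eq0 disjoints_subset.
  by rewrite inE subsetUr /= cardsU cardB disjBD cards0 subn0 subnK.
Qed.

Lemma count_subsets_with_pair (T : finType) (s : nat) (x y : T) :
  (x != y).+1 <= s ->
  \sum_(S : {set T} | #|S| == s) ((x \in S) && (y \in S) : nat)
    = 'C(#|T| - (x != y).+1, s - (x != y).+1).
Proof.
move=> les; rewrite -cards2 -card_supersets ?cards2 // -sum1_card.
rewrite big_mkcond [RHS]big_mkcond /=; apply: eq_bigr => S _.
by rewrite inE subUset !sub1set; case: (#|S| == s); case: (x \in S); case: (y \in S).
Qed.

(* Absorption identity relating the two binomials occurring in the theorem;
   it says 'C(d-2, s-2) / 'C(d-1, s-1) = (s-1) / (d-1). *)
Lemma mul_bin_pred2 (d s : nat) : 2 <= s ->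
  (s - 1) * 'C(d - 1, s - 1) = (d - 1) * 'C(d - 2, s - 2).
Proof.
move=> le2s; have := mul_bin_diag (d - 1) (s - 2).
by rewrite -subnS -subSn // -[(s - 2).+1]subSn // => ->.
Qed.

Lemma bin_pred2_le (d s : nat) : 2 <= s -> s <= d -> 'C(d - 2, s - 2) <= 'C(d - 1, s - 1).
Proof.
move=> le2s lesd; rewrite -(@leq_pmul2l (s - 1)); last by lia.
by rewrite mul_bin_pred2 // leq_mul2r leq_sub2r ?orbT.
Qed.

(* The ratio (s-1)/(d-1) decreases with d: cross-multiplied form. *)
Lemma bin_ratio_antimono (d d' s : nat) : 2 <= s -> s <= d -> d <= d' ->
  'C(d - 1, s - 1) * 'C(d' - 2, s - 2) <= 'C(d - 2, s - 2) * 'C(d' - 1, s - 1).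
Proof.
move=> le2s lesd ledd'; rewrite -(@leq_pmul2l (s - 1)); last by lia.
rewrite mulnA mul_bin_pred2 // mulnCA mul_bin_pred2 // mulnA.
by rewrite [X in (_ <= X * _)]mulnC leq_mul2r leq_mul2r leq_sub2r ?orbT.
Qed.

Section ProductBound.
(* Four factors, each of which may be lowered from B_i to A_i <= B_i; the
   relative loss B_i / A_i is larger for i in {3,4} than for i in {1,2}. *)
Variables A1 A2 A3 A4 B1 B2 B3 B4 : nat.
Hypotheses (le3 : A3 <= B3) (le4 : A4 <= B4).
Hypotheses (x13 : B1 * A3 <= A1 * B3) (x14 : B1 * A4 <= A1 * B4)
           (x23 : B2 * A3 <= A2 * B3) (x24 : B2 * A4 <= A2 * B4).

Let sel_le (e : bool) (A B : nat) : A <= B -> (if e then A else B) <= B.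
Proof. by case: e. Qed.

(* Lowering a small-index factor is paid for by raising a lowered
   large-index factor. *)
Let trade (A B : nat) (e3 e4 : bool) :
  B * A3 <= A * B3 -> B * A4 <= A * B4 -> 0 < e3 + e4 ->
  B * (if e3 then A3 else B3) * (if e4 then A4 else B4) <= A * B3 * B4.
Proof.
move=> xA3 xA4; case: e3 => /= [_|]; first by rewrite leq_mul // sel_le.
case: e4 => //= _; rewrite mulnAC [X in (_ <= X)]mulnAC.
exact: leq_mul.
Qed.

Lemma prod_two_lowered_le (e1 e2 e3 e4 : bool) : 2 <= e1 + e2 + e3 + e4 ->
  (if e1 then A1 else B1) * (if e2 then A2 else B2) *
  (if e3 then A3 else B3) * (if e4 then A4 else B4) <= A1 * A2 * B3 * B4.
Proof.
case: e1; case: e2 => /= he.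
- by rewrite !leq_mul ?sel_le.
- by rewrite -!mulnA leq_mul // !mulnA trade //; lia.
- by rewrite [B1 * A2]mulnC [A1 * A2]mulnC -!mulnA leq_mul // !mulnA trade //; lia.
- case: e3 e4 he => [] [] //= _.
  rewrite -[B1 * B2 * A3 * A4]mulnA -[A1 * A2 * B3 * B4]mulnA.
  by rewrite mulnACA [X in (_ <= X)]mulnACA leq_mul.
Qed.
End ProductBound.

Local Open Scope ring_scope.

Section Mix.
Variables d1 d2 d3 d4 : nat.
Local Notation I := (idx4 d1 d2 d3 d4).
Implicit Types (al : {set 'I_4}) (p q : I).

Definition parties_differ p q : nat :=
  (p1 p != p1 q) + (p2 p != p2 q) + (p3 p != p3 q) + (p4 p != p4 q).

Lemma mixK al p q : mix al (mix al p q) (mix al q p) = p.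
Proof.
case: p q => [[[? ?] ?] ?] [[[? ?] ?] ?]; rewrite /mix /p1 /p2 /p3 /p4 /=.
by case: ((0 : 'I_4) \in al); case: ((1 : 'I_4) \in al); case: ((2 : 'I_4) \in al);
   case: ((3 : 'I_4) \in al).
Qed.

Lemma mixC al p q : mix (~: al) p q = mix al q p.
Proof.
rewrite /mix !inE.
by case: ((0 : 'I_4) \in al); case: ((1 : 'I_4) \in al); case: ((2 : 'I_4) \in al);
   case: ((3 : 'I_4) \in al).
Qed.

Lemma mix_eq_right al p q :
  (mix al q p == p) =
  ~~ [|| ((0 : 'I_4) \in al) && (p1 p != p1 q), ((1 : 'I_4) \in al) && (p2 p != p2 q),
         ((2 : 'I_4) \in al) && (p3 p != p3 q) | ((3 : 'I_4) \in al) && (p4 p != p4 q)].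
Proof.
case: p q => [[[x1 x2] x3] x4] [[[y1 y2] y3] y4]; rewrite /mix /p1 /p2 /p3 /p4 /=.
case: ((0 : 'I_4) \in al); case: ((1 : 'I_4) \in al); case: ((2 : 'I_4) \in al);
  case: ((3 : 'I_4) \in al); rewrite /= !xpair_eqE ?eqxx /= ?negb_or ?negbK ?andbT -?andbA
    ?(eq_sym y1) ?(eq_sym y2) ?(eq_sym y3) ?(eq_sym y4) //.
Qed.

Lemma sum_mix_swap (V : nmodType) al (F : I -> I -> V) :
  \sum_p \sum_q F p q = \sum_p \sum_q F (mix al q p) (mix al p q).
Proof.
rewrite !pair_big /=.
pose swap (u : I * I) := (mix al u.2 u.1, mix al u.1 u.2).
have swapK : involutive swap by move=> [p q]; rewrite /swap /= !mixK.
exact: (reindex_inj (inv_inj swapK)).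
Qed.

Lemma mix_swap_fixed al p q : (mix al p q == q) = (mix al q p == p).
Proof.
by rewrite !mix_eq_right (eq_sym (p1 q)) (eq_sym (p2 q)) (eq_sym (p3 q)) (eq_sym (p4 q)).
Qed.
End Mix.

Lemma two_witnesses (m1 m2 m3 m4 e1 e2 e3 e4 : bool) :
  [|| m1 && e1, m2 && e2, m3 && e3 | m4 && e4] ->
  [|| ~~ m1 && e1, ~~ m2 && e2, ~~ m3 && e3 | ~~ m4 && e4] ->
  (2 <= e1 + e2 + e3 + e4)%N.
Proof. by case: m1 m2 m3 m4 e1 e2 e3 e4 => [] [] [] [] [] [] [] []. Qed.

Section Defect.
Variables (C : numClosedFieldType) (d1 d2 d3 d4 : nat).
Local Notation I := (idx4 d1 d2 d3 d4).
Implicit Types (al : {set 'I_4}) (b : I -> C) (p q : I).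

(* Defect of the 2 x 2 minor of the (al | complement) matricisation of b
   spanned by the rows and columns of p and q. *)
Definition swap_defect al b p q : C :=
  `|b p * b q - b (mix al q p) * b (mix al p q)| ^+ 2.

Lemma sum_swap_defect al b :
  \sum_p \sum_q swap_defect al b p q = (tr_sigma b ^+ 2 - tr_red_sq al b) *+ 2.
Proof.
pose direct p q := b p * b q * (b p)^* * (b q)^*.
pose cross p q := b p * (b (mix al q p))^* * b q * (b (mix al p q))^*.
have expand p q : swap_defect al b p q = direct p q - cross p q
    - cross (mix al q p) (mix al p q) + direct (mix al q p) (mix al p q).
  by rewrite /swap_defect /direct /cross !mixK normCK rmorphB !rmorphM /=; ring.
have sum_direct : \sum_p \sum_q direct p q = tr_sigma b ^+ 2.
  rewrite /tr_sigma expr2 big_distrl; apply: eq_bigr => p _.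
  by rewrite big_distrr; apply: eq_bigr => q _; rewrite /direct /=; ring.
under eq_bigr do under eq_bigr do rewrite expand.
under eq_bigr do rewrite big_split /= !sumrB.
rewrite big_split /= !sumrB -!(sum_mix_swap al) sum_direct.
have -> : \sum_p \sum_q cross p q = tr_red_sq al b by [].
by rewrite mulr2n; ring.
Qed.

(* A nonzero defect needs p and q to differ both inside and outside al. *)
Lemma swap_defect_support al b p q :
  swap_defect al b p q != 0 -> (2 <= parties_differ p q)%N.
Proof.
move=> nz_defect.
have moved_right : mix al q p != p.
  apply: contraNneq nz_defect => fixp.
  have /eqP fixq : mix al p q == q by rewrite mix_swap_fixed fixp.
  by rewrite /swap_defect fixp fixq subrr normr0 expr0n.
have moved_left : mix al q p != q.
  apply: contraNneq nz_defect => fixq.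
  have /eqP fixp : mix al p q == p by rewrite -mixC mix_swap_fixed mixC fixq.
  by rewrite /swap_defect fixp fixq mulrC subrr normr0 expr0n.
move: moved_right moved_left; rewrite mix_eq_right negbK => moved_in.
rewrite -mixC mix_eq_right negbK !inE.
rewrite (eq_sym (p1 q)) (eq_sym (p2 q)) (eq_sym (p3 q)) (eq_sym (p4 q)).
exact: two_witnesses moved_in.
Qed.

Lemma card_proper_parties :
  #|[pred al : {set 'I_4} | (al != set0) && (al != setT)]| = 14%N.
Proof.
have parts : #|{set 'I_4}| = 16%N.
  by rewrite -cardsT -powersetT card_powerset cardsT card_ord.
have set0_neqT : (set0 : {set 'I_4}) != setT by apply/eqP => /setP/(_ ord0); rewrite !inE.
rewrite (@eq_card _ _ (~: [set set0; setT])); last by move=> al; rewrite !inE negb_or.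
by have := cardsC [set (set0 : {set 'I_4}); setT]; rewrite cards2 set0_neqT parts; lia.
Qed.

Lemma conc4_sq b :
  conc4 b ^+ 2 = 8^-1 * \sum_(al : {set 'I_4} | (al != set0) && (al != setT))
                           \sum_p \sum_q swap_defect al b p q.
Proof.
rewrite /conc4 exprMn sqrtCK (eq_bigr _ (fun al _ => sum_swap_defect al b)).
rewrite sumrMnl sumrB sumr_const card_proper_parties.
by field.
Qed.

Section Substate.
Variables (S1 : {set 'I_d1}) (S2 : {set 'I_d2}) (S3 : {set 'I_d3}) (S4 : {set 'I_d4}).

Definition in_box p : bool :=
  [&& p1 p \in S1, p2 p \in S2, p3 p \in S3 & p4 p \in S4].

Lemma in_box_mix al p q : in_box p -> in_box q -> in_box (mix al p q).
Proof.
rewrite /in_box /mix /p1 /p2 /p3 /p4 /= => /and4P[? ? ? ?] /and4P[? ? ? ?].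
by case: ((0 : 'I_4) \in al); case: ((1 : 'I_4) \in al); case: ((2 : 'I_4) \in al);
   case: ((3 : 'I_4) \in al); apply/and4P.
Qed.

Let substate_mul_out b x y : ~~ (in_box x && in_box y) ->
  substate S1 S2 S3 S4 b x * substate S1 S2 S3 S4 b y = 0.
Proof.
by rewrite /substate -!/(in_box _); case: (in_box x); case: (in_box y); rewrite ?(mul0r, mulr0).
Qed.

(* The box is closed under mixing, so a defect of the projected state is the
   defect of the state when both indices lie in the box, and 0 otherwise. *)
Lemma swap_defect_substate al b p q :
  swap_defect al (substate S1 S2 S3 S4 b) p q =
  swap_defect al b p q * (in_box p && in_box q : nat)%:R.
Proof.
have [/andP[hp hq]|out] := boolP (in_box p && in_box q).
  by rewrite /swap_defect /substate -!/(in_box _) hp hq !in_box_mix // mulr1.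
have out_mix : ~~ (in_box (mix al q p) && in_box (mix al p q)).
  apply: contra out => /andP[hqp hpq]; apply/andP; split.
  - by have := in_box_mix al hpq hqp; rewrite mixK.
  - by have := in_box_mix al hqp hpq; rewrite mixK.
by rewrite /swap_defect !substate_mul_out // subrr normr0 expr0n mulr0.
Qed.

Lemma in_box_pair p q :
  (in_box p && in_box q : nat) =
  (((p1 p \in S1) && (p1 q \in S1)) * ((p2 p \in S2) && (p2 q \in S2)) *
   ((p3 p \in S3) && (p3 q \in S3)) * ((p4 p \in S4) && (p4 q \in S4)))%N.
Proof.
rewrite /in_box !mulnb.
by case: (p1 p \in S1); case: (p2 p \in S2); case: (p3 p \in S3); case: (p4 p \in S4);
   case: (p1 q \in S1); case: (p2 q \in S2); case: (p3 q \in S3); case: (p4 q \in S4).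
Qed.

Lemma conc4_substate_sq b :
  conc4 (substate S1 S2 S3 S4 b) ^+ 2 =
  8^-1 * \sum_(al : {set 'I_4} | (al != set0) && (al != setT)) \sum_p \sum_q
           swap_defect al b p q * (in_box p && in_box q : nat)%:R.
Proof.
rewrite conc4_sq.
by under eq_bigr do under eq_bigr do under eq_bigr do rewrite swap_defect_substate.
Qed.
End Substate.
End Defect.

Section BoxSum.
Definition box_sum (V : nmodType) (d1 d2 d3 d4 s : nat)
  (F : {set 'I_d1} -> {set 'I_d2} -> {set 'I_d3} -> {set 'I_d4} -> V) : V :=
  \sum_(S1 : {set 'I_d1} | #|S1| == s) \sum_(S2 : {set 'I_d2} | #|S2| == s)
  \sum_(S3 : {set 'I_d3} | #|S3| == s) \sum_(S4 : {set 'I_d4} | #|S4| == s)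
     F S1 S2 S3 S4.

Variables d1 d2 d3 d4 s : nat.
Local Notation boxfun V := ({set 'I_d1} -> {set 'I_d2} -> {set 'I_d3} -> {set 'I_d4} -> V).

Lemma eq_box_sum (V : nmodType) (F G : boxfun V) :
  (forall S1 S2 S3 S4, F S1 S2 S3 S4 = G S1 S2 S3 S4) -> box_sum s F = box_sum s G.
Proof. by move=> eqFG; do 4!(apply: eq_bigr => ? _). Qed.

Lemma box_sum_sum (V : nmodType) (J : finType) (P : pred J) (h : J -> boxfun V) :
  box_sum s (fun S1 S2 S3 S4 => \sum_(j | P j) h j S1 S2 S3 S4) =
  \sum_(j | P j) box_sum s (h j).
Proof.
rewrite /box_sum.
under eq_bigr do under eq_bigr do under eq_bigr do rewrite exchange_big.
under eq_bigr do under eq_bigr do rewrite exchange_big.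
by under eq_bigr do rewrite exchange_big; rewrite exchange_big.
Qed.

Lemma box_sumZ (R : pzSemiRingType) (k : R) (F : boxfun R) :
  box_sum s (fun S1 S2 S3 S4 => k * F S1 S2 S3 S4) = k * box_sum s F.
Proof. by rewrite /box_sum !mulr_sumr; do 3!(apply: eq_bigr => ? _; rewrite !mulr_sumr). Qed.

Lemma box_sum_prod (R : comPzSemiRingType) (f1 : {set 'I_d1} -> R)
    (f2 : {set 'I_d2} -> R) (f3 : {set 'I_d3} -> R) (f4 : {set 'I_d4} -> R) :
  box_sum s (fun S1 S2 S3 S4 => f1 S1 * f2 S2 * f3 S3 * f4 S4) =
  (\sum_(S1 : {set 'I_d1} | #|S1| == s) f1 S1) * (\sum_(S2 : {set 'I_d2} | #|S2| == s) f2 S2)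
  * (\sum_(S3 : {set 'I_d3} | #|S3| == s) f3 S3) * (\sum_(S4 : {set 'I_d4} | #|S4| == s) f4 S4).
Proof.
rewrite /box_sum !big_distrl /=; apply: eq_bigr => S1 _.
rewrite [f1 S1 * _]mulr_sumr !big_distrl /=; apply: eq_bigr => S2 _.
rewrite [_ * f2 S2 * _]mulr_sumr big_distrl /=; apply: eq_bigr => S3 _.
by rewrite mulr_sumr.
Qed.
End BoxSum.

Section BoxCount.
Variables d1 d2 d3 d4 s : nat.
Hypothesis le2s : (2 <= s)%N.
Local Notation I := (idx4 d1 d2 d3 d4).
Implicit Types (p q : I).

(* Number of boxes with s-element sides containing both p and q. *)
Definition box_pair_count p q : nat :=
  ('C(d1 - (p1 p != p1 q).+1, s - (p1 p != p1 q).+1) *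
   'C(d2 - (p2 p != p2 q).+1, s - (p2 p != p2 q).+1) *
   'C(d3 - (p3 p != p3 q).+1, s - (p3 p != p3 q).+1) *
   'C(d4 - (p4 p != p4 q).+1, s - (p4 p != p4 q).+1))%N.

Definition box_count_bound : nat :=
  ('C(d1 - 2, s - 2) * 'C(d2 - 2, s - 2) * 'C(d3 - 1, s - 1) * 'C(d4 - 1, s - 1))%N.

Lemma box_count_bound_gt0 : (s <= d1)%N -> (d1 <= d2)%N -> (d2 <= d3)%N -> (d3 <= d4)%N ->
  (0 < box_count_bound)%N.
Proof. by move=> *; rewrite !muln_gt0 !bin_gt0; lia. Qed.

Lemma box_pair_count_le p q :
  (s <= d1)%N -> (d1 <= d2)%N -> (d2 <= d3)%N -> (d3 <= d4)%N ->
  (2 <= parties_differ p q)%N -> (box_pair_count p q <= box_count_bound)%N.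
Proof.
move=> lesd1 le12 le23 le34 differ.
have bin_sel (e : bool) d :
  'C(d - e.+1, s - e.+1) = if e then 'C(d - 2, s - 2) else 'C(d - 1, s - 1).
  by case: e.
rewrite /box_pair_count !bin_sel; apply: prod_two_lowered_le => //.
all: first [exact: differ | apply: bin_pred2_le | apply: bin_ratio_antimono]; lia.
Qed.

Lemma box_sum_pair_indicator (R : comPzSemiRingType) p q :
  box_sum s (fun S1 S2 S3 S4 =>
    ((in_box S1 S2 S3 S4 p && in_box S1 S2 S3 S4 q : nat)%:R : R)) =
  (box_pair_count p q)%:R.
Proof.
have le_pair_s (e : bool) : (e.+1 <= s)%N by case: e; lia.
under eq_box_sum => S1 S2 S3 S4 do rewrite in_box_pair !natrM.
rewrite box_sum_prod -!natr_sum !count_subsets_with_pair ?card_ord //.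
by rewrite /box_pair_count !natrM.
Qed.

Lemma box_sum_conc4_substate (C : numClosedFieldType) (a : I -> C) :
  box_sum s (fun S1 S2 S3 S4 => conc4 (substate S1 S2 S3 S4 a) ^+ 2) =
  8^-1 * \sum_(al : {set 'I_4} | (al != set0) && (al != setT)) \sum_p \sum_q
           swap_defect al a p q * (box_pair_count p q)%:R.
Proof.
rewrite (eq_box_sum s (fun S1 S2 S3 S4 => conc4_substate_sq S1 S2 S3 S4 a)).
rewrite box_sumZ box_sum_sum; congr (_ * _); apply: eq_bigr => al _.
rewrite box_sum_sum; apply: eq_bigr => p _; rewrite box_sum_sum; apply: eq_bigr => q _.
by rewrite box_sumZ box_sum_pair_indicator.
Qed.

(* Termwise comparison: a nonzero defect forces p, q to differ in two parties. *)
Lemma weighted_defect_le (C : numClosedFieldType) (a : I -> C) al p q :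
  (s <= d1)%N -> (d1 <= d2)%N -> (d2 <= d3)%N -> (d3 <= d4)%N ->
  swap_defect al a p q * (box_pair_count p q)%:R <= box_count_bound%:R * swap_defect al a p q.
Proof.
move=> lesd1 le12 le23 le34; rewrite mulrC.
have [->|nz_defect] := eqVneq (swap_defect al a p q) 0; first by rewrite !mulr0.
rewrite ler_wpM2r ?exprn_ge0 // ler_nat.
exact/box_pair_count_le/swap_defect_support/nz_defect.
Qed.
End BoxCount.

Theorem mainTheorem6 (C : numClosedFieldType) (d1 d2 d3 d4 s : nat)
  (a : idx4 d1 d2 d3 d4 -> C) :
  (2 <= d1)%N -> (d1 <= d2)%N -> (d2 <= d3)%N -> (d3 <= d4)%N ->
  (2 <= s)%N -> (s <= d1)%N ->
  tr_sigma a = 1 ->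
  ('C(d1 - 2, s - 2) * 'C(d2 - 2, s - 2) * 'C(d3 - 1, s - 1) * 'C(d4 - 1, s - 1))%:R^-1 *
    (\sum_(S1 : {set 'I_d1} | #|S1| == s)
     \sum_(S2 : {set 'I_d2} | #|S2| == s)
     \sum_(S3 : {set 'I_d3} | #|S3| == s)
     \sum_(S4 : {set 'I_d4} | #|S4| == s)
        conc4 (substate S1 S2 S3 S4 a) ^+ 2)
  <= conc4 a ^+ 2.
Proof.
move=> _ le12 le23 le34 le2s lesd1 _.
have := box_sum_conc4_substate le2s a; rewrite /box_sum => ->.
rewrite -/(box_count_bound d1 d2 d3 d4 s) conc4_sq mulrCA.
rewrite ler_wpM2l ?invr_ge0 ?ler0n // ler_pdivrMl ?ltr0n ?box_count_bound_gt0 //.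
rewrite !mulr_sumr; apply: ler_sum => al _; rewrite !mulr_sumr; apply: ler_sum => p _.
rewrite !mulr_sumr; apply: ler_sum => q _; exact: weighted_defect_le.
Qed.
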